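(* Let $k>1$ and let $\varphi$ be as in the context. If $M,N\models\varphi$, $M$ is a substructure of $N$, and $N$ has a solution, then $M$ has a solution.
   Context: Fix a natural number $k>1$. $Z_2=\{0,1\}$ is the two-element group. The language $\mathcal{L}$ consists of: unary predicates $I,K,R,P,G^a,H^a$; binary predicates $\in$ and $H^b$; ternary predicates $\pi,\rho,+,G^b$; a 4-ary predicate $h$; a 5-ary predicate $g$; a $(k+1)$-ary predicate $Q_l$ for each $l<\omega$; and constants $c_a$ for each $a\in Z_2\cup\omega$. $K(M),I(M)$ denote the interpretations of $K,I$ in $M$. $T$ is the collection of the following conditions on an $\mathcal{L}$-structure: (1) $I$ is infinite, $K$ is (identified via $\in$ with) the collection of $k$-element subsets of $I$, and $\in$ is membership between elements of $I$ and of $K$. (2) $I,K,R,G^a,H^a$ are pairwise disjoint and their union with the constants $c_a$, $a\in Z_2$, is $P$. (3) $R(c_a)$ for every $a\in\omega$. (4) $G^b(l,u,x)$ implies $R(l)$, $K(u)$; $H^b(u,x)$ implies $K(u)$. (5) If $x\notin P$ then $G^b(l,u,x)$ for some $l,u$ or $H^b(u,x)$ for some $u$; for all $l\in R$, $u,v\in K$, the sets $P$, $H^b(u,-)$, $G^b(l,v,-)$ are pairwise disjoint. (6) $\pi(u,a,z)$ implies $K(u)$, $G^a(a)$, $z$ a constant indexed by $Z_2$. (7) $\rho(l,b,z)$ implies $R(l)$, $H^a(b)$, $z$ a constant indexed by $Z_2$. (8) $g(l,u,a,v,w)$ implies $R(l),K(u),G^a(a),G^b(l,u,v),G^b(l,u,w)$.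 (9) $h(u,b,x,y)$ implies $K(u),H^a(b),H^b(u,x),H^b(u,y)$. (10) The constants $c_a$, $a\in Z_2$, with $+$ form a copy of $Z_2$. (11) $+$ on $G^a$ gives a subgroup of $\prod_K Z_2$ containing $\coprod_K Z_2$, projections given by $\pi$. (12) $+$ on $H^a$ gives a subgroup of $\prod_R Z_2$ containing $\coprod_R Z_2$, projections given by $\rho$. (13) For $l\in R,u\in K$, $G^b(l,u,-)\neq\emptyset$, and for each $x$ with $G^b(l,u,x)$, $g(l,u,-,x,-)$ is a bijection from $G^a$ onto $G^b(l,u,-)$; $g(l,u,x,y,z)\Rightarrow g(l,u,x,z,y)$; $g(l,u,a,x,y)\wedge g(l,u,b,y,z)\Rightarrow g(l,u,a+b,x,z)$. (14) For $u\in K$, $H^b(u,-)\ne\emptyset$, and for each $x$ with $H^b(u,x)$, $h(u,-,x,-)$ is a bijection from $H^a$ onto $H^b(u,-)$; $h(u,x,y,z)\Rightarrow h(u,x,z,y)$; $h(u,a,x,y)\wedge h(u,b,y,z)\Rightarrow h(u,a+b,x,z)$. (15) If $Q_l(x_0,\dots,x_k)$ then $G^b(c_l,u_i,x_i)$ for some $u_i\in K$ ($i<k$), $H^b(u_k,x_k)$ for some $u_k\in K$, $u_0,\dots,u_k$ are all the $k$-element subsets of some $(k+1)$-element subset of $I$, and $Q_l(x_{\sigma(0)},\dots,x_{\sigma(k-1)},x_k)$ for every permutation $\sigma$ of $k$. (16) If $Q_l(x_0,\dots,x_k)$, $G^b(c_l,u,x_0)$, $H^b(v,x_k)$, $G^b(c_l,u,x_0')$,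 $H^b(v,x_k')$, then $Q_l(x_0',x_1,\dots,x_k)$ iff the $v$-projection via $\pi$ of the unique $a$ with $g(c_l,u,a,x_0,x_0')$ is $0$, and $Q_l(x_0,\dots,x_{k-1},x_k')$ iff the $c_l$-projection via $\rho$ of the unique $a$ with $h(v,a,x_k,x_k')$ is $0$. (17) For $l\in\omega$, $u\in K$, distinct $i_0,\dots,i_{n-1}\in I\setminus u$, with $v^j_1,\dots,v^j_k$ listing the $k$-subsets of $u\cup\{i_j\}$ other than $u$: if $G^b(c_l,v^j_i,x^j_i)$ ($j<n$, $1\le i<k$) and $H^b(v^j_k,y_j)$ ($j<n$), then $\exists x\bigwedge_{j<n}Q_l(x,x^j_1,\dots,x^j_{k-1},y_j)$. $\varphi$ is the $\mathcal{L}_{\omega_1\omega}$ sentence which is the conjunction of $T$ with: $R$ contains only the constants $c_l$, $l\in\omega$; $G^a$ is canonically isomorphic (via $\pi$) to $\coprod_K Z_2$; $H^a$ is canonically isomorphic (via $\rho$) to $\coprod_\omega Z_2$. Solutions: for $M\models T$, $W\subseteq(\omega\times K(M))\cup K(M)$ and $f:W\to M$, $f$ is a solution for $W$ if (i) $(l,u)\in W$ implies $M\models G^b(c_l,u,f(l,u))$; (ii) $u\in W$ implies $M\models H^b(u,f(u))$; (iii) whenever $u_0,\dots,u_k\in K(M)$ are all the $k$-element subsets of some $(k+1)$-element subset of $I(M)$, $(l,u_i)\in W$ for all $i<k$ and $u_k\in W$, then $M\models Q_l(f(l,u_0),\dots,f(l,u_{k-1}),f(u_k))$. $M$ has a solution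 if there is a solution for $(\omega\times K(M))\cup K(M)$. *)

From mathcomp Require Import all_boot all_fingroup.
From Stdlib Require List.

Set Implicit Arguments.
Unset Strict Implicit.
Unset Printing Implicit Defensive.

(* Z_2 = bool; the constant c_a for a in Z_2 is [c2 M a] (c2 M false = c_0); for a in omega it is [cw M a]. *)
(* The (k+1)-ary predicate Q_l(x_0,...,x_{k-1},x_k) is rendered as    *)
(* [Q M l xs xk] with xs : 'I_k -> carrier listing x_0..x_{k-1}.       *)
Record Lstr (k : nat) := {
  car : Type;
  Ip : car -> Prop;  Kp : car -> Prop;  Rp : car -> Prop;  Pp : car -> Prop;
  Ga : car -> Prop;  Ha : car -> Prop;
  memb : car -> car -> Prop;
  Hb : car -> car -> Prop;
  pi : car -> car -> car -> Prop;
  rho : car -> car -> car -> Prop;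
  pl : car -> car -> car -> Prop;
  Gb : car -> car -> car -> Prop;
  hh : car -> car -> car -> car -> Prop;
  gg : car -> car -> car -> car -> car -> Prop;
  Q : nat -> ('I_k -> car) -> car -> Prop;
  c2 : bool -> car;
  cw : nat -> car
}.

Definition disj (T : Type) (A B : T -> Prop) := forall x, A x -> B x -> False.

Definition finsize (T : Type) (S : T -> Prop) (n : nat) :=
  exists s : list T, List.length s = n /\ List.NoDup s /\
    forall x, S x <-> List.In x s.

Section TheoryDefs.
Variables (k : nat) (M : Lstr k).
Local Notation U := (car M).
Local Notation I := (@Ip _ M). Local Notation K := (@Kp _ M).
Local Notation R := (@Rp _ M). Local Notation P := (@Pp _ M).
Local Notation Ga := (@Ga _ M). Local Notation Ha := (@Ha _ M).
Local Notation mem := (@memb _ M). Local Notation Hb := (@Hb _ M).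
Local Notation pi := (@pi _ M). Local Notation rho := (@rho _ M).
Local Notation pl := (@pl _ M). Local Notation Gb := (@Gb _ M).
Local Notation h := (@hh _ M). Local Notation g := (@gg _ M).
Local Notation Q := (@Q _ M). Local Notation c2 := (@c2 _ M). Local Notation cw := (@cw _ M).

(* us (indices 0..k-1) together with w are exactly the k-element subsets
   of the (k+1)-element subset S of I, each listed once. *)
Definition facesOn (S : U -> Prop) (us : 'I_k -> U) (w : U) :=
  finsize S k.+1 /\ (forall x, S x -> I x) /\
  K w /\ (forall x, mem x w -> S x) /\
  (forall i, K (us i) /\ forall x, mem x (us i) -> S x) /\
  injective us /\ (forall i, us i <> w).

Definition faces (us : 'I_k -> U) (w : U) := exists S, facesOn S us w.

Definition isZ2 (z : U) := z = c2 false \/ z = c2 true.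

Definition T1 :=
  (~ exists s : list U, forall x, I x -> List.In x s) /\
  (forall x u, mem x u -> I x /\ K u) /\
  (forall u, K u -> finsize (fun x => mem x u) k) /\
  (forall u v, K u -> K v -> (forall x, mem x u <-> mem x v) -> u = v) /\
  (forall S : U -> Prop, (forall x, S x -> I x) -> finsize S k ->
     exists u, K u /\ forall x, mem x u <-> S x).

Definition T2 :=
  disj I K /\ disj I R /\ disj I Ga /\ disj I Ha /\ disj K R /\
  disj K Ga /\ disj K Ha /\ disj R Ga /\ disj R Ha /\ disj Ga Ha /\
  (forall x, P x <-> I x \/ K x \/ R x \/ Ga x \/ Ha x \/
                     x = c2 false \/ x = c2 true).

Definition T3 := forall l, R (cw l).

Definition T4 :=
  (forall l u x, Gb l u x -> R l /\ K u) /\ (forall u x, Hb u x -> K u).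

Definition T5 :=
  (forall x, ~ P x -> (exists l u, Gb l u x) \/ (exists u, Hb u x)) /\
  (forall l u v, R l -> K u -> K v ->
     disj P (Hb u) /\ disj P (Gb l v) /\ disj (Hb u) (Gb l v)).

Definition T6 := forall u a z, pi u a z -> K u /\ Ga a /\ isZ2 z.
Definition T7 := forall l b z, rho l b z -> R l /\ Ha b /\ isZ2 z.

Definition T8 := forall l u a v w, g l u a v w ->
  R l /\ K u /\ Ga a /\ Gb l u v /\ Gb l u w.

Definition T9 := forall u b x y, h u b x y ->
  K u /\ Ha b /\ Hb u x /\ Hb u y.

Definition T10 :=
  c2 false <> c2 true /\
  (forall a b, pl (c2 a) (c2 b) (c2 (addb a b))) /\
  (forall a b z, pl (c2 a) (c2 b) z -> z = c2 (addb a b)).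

(* + on A is a subgroup of prod_{Ix} Z_2 containing coprod_{Ix} Z_2,
   with projections given by pr (pr i a z : "the i-coordinate of a is z") *)
Definition subgroup_prod (A Ix : U -> Prop) (pr : U -> U -> U -> Prop) :=
  (forall a i, A a -> Ix i ->
     exists b, pr i a (c2 b) /\ forall b', pr i a (c2 b') -> b' = b) /\
  (forall a a', A a -> A a' ->
     (forall i b, Ix i -> pr i a (c2 b) -> pr i a' (c2 b)) -> a = a') /\
  (forall a a', A a -> A a' -> exists z, A z /\ pl a a' z) /\
  (forall a a' z, A a -> A a' -> pl a a' z ->
     A z /\ forall i b b', Ix i -> pr i a (c2 b) -> pr i a' (c2 b') ->
                           pr i z (c2 (addb b b'))) /\
  (forall s : list U, (forall i, List.In i s -> Ix i) ->
     exists a, A a /\ forall i, Ix i -> (pr i a (c2 true) <-> List.In i s)).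

Definition T11 := subgroup_prod Ga K pi.
Definition T12 := subgroup_prod Ha R rho.

Definition T13 :=
  (forall l u, R l -> K u ->
     (exists x, Gb l u x) /\
     forall x, Gb l u x ->
       (forall a, Ga a -> exists y, g l u a x y) /\
       (forall a y y', g l u a x y -> g l u a x y' -> y = y') /\
       (forall a a' y, g l u a x y -> g l u a' x y -> a = a') /\
       (forall y, Gb l u y -> exists a, Ga a /\ g l u a x y)) /\
  (forall l u a x y, g l u a x y -> g l u a y x) /\
  (forall l u a b c x y z, g l u a x y -> g l u b y z -> pl a b c ->
     g l u c x z).

Definition T14 :=
  (forall u, K u ->
     (exists x, Hb u x) /\
     forall x, Hb u x ->
       (forall b, Ha b -> exists y, h u b x y) /\
       (forall b y y', h u b x y -> h u b x y' -> y = y') /\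
       (forall b b' y, h u b x y -> h u b' x y -> b = b') /\
       (forall y, Hb u y -> exists b, Ha b /\ h u b x y)) /\
  (forall u a x y, h u a x y -> h u a y x) /\
  (forall u a b c x y z, h u a x y -> h u b y z -> pl a b c -> h u c x z).

Definition T15 :=
  forall l (xs : 'I_k -> U) y, Q l xs y ->
    (exists (us : 'I_k -> U) (w : U),
       (forall i, Gb (cw l) (us i) (xs i)) /\ Hb w y /\ faces us w) /\
    (forall s : {perm 'I_k}, Q l (fun i => xs (s i)) y).

Definition upd (xs : 'I_k -> U) (i0 : 'I_k) (x : U) : 'I_k -> U :=
  fun j => if j == i0 then x else xs j.

Definition T16 :=
  forall l (xs : 'I_k -> U) y (i0 : 'I_k) u v x0' y',
    val i0 = 0 -> Q l xs y ->
    Gb (cw l) u (xs i0) -> Hb v y -> Gb (cw l) u x0' -> Hb v y' ->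
    (forall a, g (cw l) u a (xs i0) x0' ->
       (Q l (upd xs i0 x0') y <-> pi v a (c2 false))) /\
    (forall b, h v b y y' ->
       (Q l xs y' <-> rho (cw l) b (c2 false))).

Definition T17 :=
  forall l u n (ii : 'I_n -> U) (vs : 'I_n -> 'I_k -> U) (ws : 'I_n -> U)
         (xs : 'I_n -> 'I_k -> U) (ys : 'I_n -> U),
    K u -> injective ii -> (forall j, I (ii j) /\ ~ mem (ii j) u) ->
    (forall j, facesOn (fun x => mem x u \/ x = ii j) (vs j) (ws j) /\
               forall i : 'I_k, val i = 0 -> vs j i = u) ->
    (forall j (i : 'I_k), val i <> 0 -> Gb (cw l) (vs j i) (xs j i)) ->
    (forall j, Hb (ws j) (ys j)) ->
    exists x, forall j,
      Q l (fun i : 'I_k => if val i == 0 then x else xs j i) (ys j).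

Definition theoryT :=
  T1 /\ T2 /\ T3 /\ T4 /\ T5 /\ T6 /\ T7 /\ T8 /\ T9 /\ T10 /\
  T11 /\ T12 /\ T13 /\ T14 /\ T15 /\ T16 /\ T17.

(* G^a canonically isomorphic via pi to coprod_K Z_2:
   a |-> (u |-> pi-projection) is a bijection onto finitely supported maps *)
Definition GaCanonIso :=
  (forall a, Ga a -> exists s : list U, (forall u, List.In u s -> K u) /\
      forall u, K u -> (pi u a (c2 true) <-> List.In u s)) /\
  (forall s : list U, (forall u, List.In u s -> K u) ->
      exists a, Ga a /\ forall u, K u -> (pi u a (c2 true) <-> List.In u s)) /\
  (forall a a', Ga a -> Ga a' ->
     (forall u b, K u -> pi u a (c2 b) -> pi u a' (c2 b)) -> a = a').

(* H^a canonically isomorphic via rho to coprod_omega Z_2 (index l <-> c_l) *)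
Definition HaCanonIso :=
  (forall b, Ha b -> exists s : list nat,
      forall l, rho (cw l) b (c2 true) <-> List.In l s) /\
  (forall s : list nat, exists b, Ha b /\
      forall l, (rho (cw l) b (c2 true) <-> List.In l s) /\
                (rho (cw l) b (c2 false) <-> ~ List.In l s)) /\
  (forall b b', Ha b -> Ha b' ->
     (forall l e, rho (cw l) b (c2 e) -> rho (cw l) b' (c2 e)) -> b = b').

Definition phi :=
  theoryT /\ (forall x, R x -> exists l, x = cw l) /\ GaCanonIso /\ HaCanonIso.

(* M has a solution: a solution for W = (omega x K(M)) u K(M);
   f(l,u) = f1 l u and f(u) = f2 u (values off K(M) are irrelevant). *)
Definition hasSolution :=
  exists (f1 : nat -> U -> U) (f2 : U -> U),
    (forall l u, K u -> Gb (cw l) u (f1 l u)) /\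
    (forall u, K u -> Hb u (f2 u)) /\
    (forall l (us : 'I_k -> U) w, faces us w ->
       Q l (fun i => f1 l (us i)) (f2 w)).

End TheoryDefs.

Definition substructure (k : nat) (M N : Lstr k) :=
  exists e : car M -> car N, injective e /\
    (forall x, @Ip _ M x <-> @Ip _ N (e x)) /\ (forall x, @Kp _ M x <-> @Kp _ N (e x)) /\
    (forall x, @Rp _ M x <-> @Rp _ N (e x)) /\ (forall x, @Pp _ M x <-> @Pp _ N (e x)) /\
    (forall x, @Ga _ M x <-> @Ga _ N (e x)) /\ (forall x, @Ha _ M x <-> @Ha _ N (e x)) /\
    (forall x y, @memb _ M x y <-> @memb _ N (e x) (e y)) /\
    (forall x y, @Hb _ M x y <-> @Hb _ N (e x) (e y)) /\
    (forall x y z, @pi _ M x y z <-> @pi _ N (e x) (e y) (e z)) /\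
    (forall x y z, @rho _ M x y z <-> @rho _ N (e x) (e y) (e z)) /\
    (forall x y z, @pl _ M x y z <-> @pl _ N (e x) (e y) (e z)) /\
    (forall x y z, @Gb _ M x y z <-> @Gb _ N (e x) (e y) (e z)) /\
    (forall x y z w, @hh _ M x y z w <-> @hh _ N (e x) (e y) (e z) (e w)) /\
    (forall x y z w v, @gg _ M x y z w v <-> @gg _ N (e x) (e y) (e z) (e w) (e v)) /\
    (forall l xs y, @Q _ M l xs y <-> @Q _ N l (fun i => e (xs i)) (e y)) /\
    (forall a, e (@c2 _ M a) = @c2 _ N a) /\ (forall l, e (@cw _ M l) = @cw _ N l).

(* Let e : M -> N be the embedding and (f1, f2) a solution of N.  Over a
   k-set u of M, the H^b-fibre of N is an H^a(N)-torsor, and H^a(N) =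
   e(H^a(M)) because both are the canonical copy of coprod_omega Z_2; so the
   fibre lies inside M and f2 restricts to M.  The G^b-fibre is a
   G^a(N)-torsor, and G^a(M) realises every finite pattern of projections on
   K(M); hence f1(l, e u) can be moved into M by an element of G^a(N) whose
   projections vanish on K(M).  By axiom (16), applied one coordinate at a
   time, such moves do not change the truth of Q_l on faces coming from M. *)

From Pilot Require Import Defs.
From mathcomp Require Import all_boot all_fingroup.
From Stdlib Require List FinFun.
From Stdlib Require Import Classical FunctionalExtensionality IndefiniteDescription.

Set Implicit Arguments.
Unset Strict Implicit.
Unset Printing Implicit Defensive.

Lemma partial_choice (A B : Type) (b0 : B) (P : A -> Prop) (R : A -> B -> Prop) :
  (forall x, P x -> exists y, R x y) -> exists f : A -> B, forall x, P x -> R x (f x).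
Proof.
move=> PR; apply: (functional_choice (fun x y => P x -> R x y)) => x.
by case: (classic (P x)) => [/PR [y Rxy] | nPx]; [exists y | exists b0].
Qed.

Lemma preimage_list (A B : Type) (e : A -> B) : injective e ->
  forall s : list B, exists s' : list A, forall m, List.In m s' <-> List.In (e m) s.
Proof.
move=> e_inj; elim=> [|x s [s' IH]]; first by exists nil.
case: (classic (exists m, e m = x)) => [[m0 <-] | nx].
- exists (m0 :: s') => m /=; rewrite IH; split.
  + by case=> [<- | ?]; [left | right].
  + by case=> [/e_inj -> | ?]; [left | right].
- exists s' => m /=; rewrite IH; split; first by right.
  by case=> // exm; case: nx; exists m.
Qed.

Lemma update_all_ind (T : Type) (n : nat) (P : ('I_n -> T) -> Prop)
    (xs ys : 'I_n -> T) :
  (forall zs i, P zs -> zs i = xs i -> P (fun j => if j == i then ys i else zs j)) ->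
  P xs -> P ys.
Proof.
move=> step Pxs.
pose mix m := fun j : 'I_n => if j < m then ys j else xs j.
have mixP m : m <= n -> P (mix m).
  elim: m => [_ | m IH lt_mn].
    by rewrite (_ : mix 0 = xs) //; apply: functional_extensionality.
  have := step _ (Ordinal lt_mn) (IH (ltnW lt_mn)); rewrite /mix /= ltnn => /(_ erefl).
  congr P; apply: functional_extensionality => j.
  case: eqVneq => [-> | ne] /=; first by rewrite ltnSn.
  by move: ne; rewrite -val_eqE /= [in RHS]ltnS [in RHS]leq_eqVlt => /negbTE ->.
have := mixP n (leqnn n); congr P; apply: functional_extensionality => j.
by rewrite /mix ltn_ord.
Qed.

Section OneStructure.

Variables (k : nat) (M : Lstr k).
Local Notation c2 := (@c2 _ M).
Local Notation cw := (@cw _ M).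

Lemma faces_K (us : 'I_k -> car M) w : faces us w -> Kp w /\ forall i, Kp (us i).
Proof. by case=> S [_ [_ [Kw [_ [Kus _]]]]]; split => // i; case: (Kus i). Qed.

Lemma subgroup_prod_sum_proj0 A Ix pr (a a' z i : car M) :
  subgroup_prod A Ix pr -> A a -> A a' -> pl a a' z -> Ix i ->
  (pr i a (c2 true) <-> pr i a' (c2 true)) -> pr i z (c2 false).
Proof.
move=> [proj [_ [_ [sum _]]]] Aa Aa' az Ii same.
have [b [pb ub]] := proj _ _ Aa Ii.
have [b' [pb' ub']] := proj _ _ Aa' Ii.
have eb : b = b'.
  case: b b' pb pb' ub ub' => [] [] pb pb' ub ub' //.
  - exact: ub' _ (same.1 pb).
  - exact: esym (ub _ (same.2 pb')).
by have := (sum _ _ _ Aa Aa' az).2 _ _ _ Ii pb pb'; rewrite eb addbb.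
Qed.

Lemma gg_transport l u (a a' c x y y' : car M) :
  T13 M -> gg l u a x y -> gg l u a' x y' -> pl a a' c -> gg l u c y y'.
Proof. by move=> [_ [gsym gcomp]] gxy gxy'; apply: gcomp (gsym _ _ _ _ _ gxy) gxy'. Qed.

Lemma Q_upd l (xs : 'I_k -> car M) y v u a i x' :
  T8 M -> T15 M -> T16 M -> Q l xs y -> Hb v y ->
  gg (cw l) u a (xs i) x' -> Defs.pi v a (c2 false) -> Q l (upd xs i x') y.
Proof.
move=> T8M T15M T16M Qxs Hvy gx pva.
have [_ [_ [_ [Gx Gx']]]] := T8M _ _ _ _ _ gx.
(* Axiom (16) only moves coordinate 0; the transposition (0 i) of (15) brings i there. *)
pose i0 : 'I_k := Ordinal (leq_ltn_trans (leq0n i) (ltn_ord i)).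
have Qs : Q l (fun j => xs (tperm i0 i j)) y := (T15M _ _ _ Qxs).2 (tperm i0 i).
rewrite -(tpermL i0 i) in Gx gx.
have [swap _] := T16M l _ y i0 u v x' y erefl Qs Gx Hvy Gx' Hvy.
have := (T15M _ _ _ ((swap a gx).2 pva)).2 (tperm i0 i).
congr Q; apply: functional_extensionality => j.
by rewrite /upd tpermK -{2}(tpermR i0 i) (inj_eq perm_inj).
Qed.

Lemma Q_upd_all l (xs xs' : 'I_k -> car M) v y :
  T8 M -> T15 M -> T16 M -> Q l xs y -> Hb v y ->
  (forall i, exists u a, gg (cw l) u a (xs i) (xs' i) /\ Defs.pi v a (c2 false)) ->
  Q l xs' y.
Proof.
move=> T8M T15M T16M Qxs Hvy steps.
apply: (update_all_ind (P := fun zs => Q l zs y)) Qxs => zs i Qzs zsi.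
have [u [a [gx pva]]] := steps i; rewrite -zsi in gx.
exact: Q_upd T8M T15M T16M Qzs Hvy gx pva.
Qed.

End OneStructure.

Record embedding (k : nat) (M N : Lstr k) (e : car M -> car N) : Prop := {
  emb_inj : injective e;
  emb_I : forall x, @Ip _ M x <-> Ip (e x);
  emb_K : forall x, @Kp _ M x <-> Kp (e x);
  emb_R : forall x, @Rp _ M x <-> Rp (e x);
  emb_P : forall x, @Pp _ M x <-> Pp (e x);
  emb_Ga : forall x, @Ga _ M x <-> Ga (e x);
  emb_Ha : forall x, @Ha _ M x <-> Ha (e x);
  emb_memb : forall x y, @memb _ M x y <-> memb (e x) (e y);
  emb_Hb : forall x y, @Hb _ M x y <-> Hb (e x) (e y);
  emb_pi : forall x y z, @Defs.pi _ M x y z <-> Defs.pi (e x) (e y) (e z);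
  emb_rho : forall x y z, @rho _ M x y z <-> rho (e x) (e y) (e z);
  emb_pl : forall x y z, @pl _ M x y z <-> pl (e x) (e y) (e z);
  emb_Gb : forall x y z, @Gb _ M x y z <-> Gb (e x) (e y) (e z);
  emb_hh : forall x y z w, @hh _ M x y z w <-> hh (e x) (e y) (e z) (e w);
  emb_gg : forall x y z w v, @gg _ M x y z w v <-> gg (e x) (e y) (e z) (e w) (e v);
  emb_Q : forall l xs y, @Q _ M l xs y <-> Q l (fun i => e (xs i)) (e y);
  emb_c2 : forall a, e (@c2 _ M a) = @c2 _ N a;
  emb_cw : forall l, e (@cw _ M l) = @cw _ N l }.

Lemma substructure_embedding (k : nat) (M N : Lstr k) :
  substructure M N -> exists e : car M -> car N, embedding e.
Proof.
case=> e [? [? [? [? [? [? [? [? [? [? [? [? [? [? [? [? [? ?]]]]]]]]]]]]]]]]].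
by exists e; constructor.
Qed.

Section Embedding.

Variables (k : nat) (M N : Lstr k) (e : car M -> car N).
Hypothesis E : embedding e.
Hypotheses (T1M : T1 M) (T1N : T1 N) (T3M : T3 M) (T3N : T3 N) (T8M : T8 M)
  (T9M : T9 M) (T11N : T11 N) (T12N : T12 N) (T13M : T13 M) (T13N : T13 N)
  (T14M : T14 M) (T14N : T14 N).
Hypotheses (GaM : GaCanonIso M) (GaN : GaCanonIso N)
  (HaM : HaCanonIso M) (HaN : HaCanonIso N).

Local Notation c2M := (@c2 _ M).
Local Notation c2N := (@c2 _ N).
Local Notation cwM := (@cw _ M).
Local Notation cwN := (@cw _ N).

(* Pigeonhole: e maps the k members of u to k distinct members of e u. *)
Lemma memb_embedding_image u x : Kp u -> memb x (e u) -> exists m, x = e m.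
Proof.
move=> Ku xu.
have [_ [_ [cardM _]]] := T1M; have [_ [_ [cardN _]]] := T1N.
have [sM [szM [ndM inM]]] := cardM u Ku.
have [sN [szN [_ inN]]] := cardN _ ((emb_K E u).1 Ku).
have sub : List.incl (List.map e sM) sN.
  by move=> _ /List.in_map_iff [m [<- /inM mu]]; apply/inN/(emb_memb E).
have nd := FinFun.Injective_map_NoDup (emb_inj E) ndM.
have le : (length sN <= length (List.map e sM))%coq_nat.
  by rewrite List.length_map szM szN.
have /List.in_map_iff [m [<- _]] := List.NoDup_length_incl nd le sub x ((inN x).1 xu).
by exists m.
Qed.

Lemma faces_embedding (us : 'I_k -> car M) w :
  faces us w -> faces (fun i => e (us i)) (e w).
Proof.
move=> [S [[sl [sll [sln sli]]] [SI [Kw [memw [hus [injus neq]]]]]]].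
have memb_in v (Kv : Kp v) (Sv : forall x, memb x v -> S x) x :
    memb x (e v) -> exists m, S m /\ x = e m.
  by move=> /[dup] /(memb_embedding_image Kv) [m ->] /(emb_memb E) /Sv; exists m.
exists (fun x => exists m, S m /\ x = e m); split.
  exists (List.map e sl); split; first by rewrite List.length_map.
  split; first exact: FinFun.Injective_map_NoDup (emb_inj E) sln.
  move=> x; split; first by move=> [m [Sm ->]]; apply/List.in_map/sli.
  by move=> /List.in_map_iff [m [<- /sli Sm]]; exists m.
split; first by move=> _ [m [Sm ->]]; apply/(emb_I E)/SI.
split; first exact/(emb_K E).
split; first exact: memb_in.
split; first by move=> i; have [Kui Sui] := hus i; split; [exact/(emb_K E) | exact: memb_in].
split; first by move=> i j /(emb_inj E) /injus.
by move=> i /(emb_inj E); apply: neq.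
Qed.

Lemma Ha_embedding_onto b : Ha b -> exists b', Ha b' /\ e b' = b.
Proof.
move=> Hab.
have [suppN [_ extN]] := HaN; have [sl Hsl] := suppN b Hab.
have [_ [buildM _]] := HaM; have [b' [Hab' Hb']] := buildM sl.
exists b'; split => //.
apply: extN => //; first exact/(emb_Ha E).
move=> l ev rho_e.
have : rho (cwM l) b' (c2M ev) by apply/(emb_rho E); rewrite (emb_cw E) (emb_c2 E).
case: ev {rho_e} => [/(Hb' l).1 /Hsl // | /(Hb' l).2 nin].
have [[] [rho_b _]] := T12N.1 b _ Hab (T3N l) => //.
by case: nin; apply/Hsl.
Qed.

Lemma Ga_embedding_approx a : Ga a -> exists a', Ga a' /\
  forall w, Kp w -> (Defs.pi (e w) (e a') (c2N true) <-> Defs.pi (e w) a (c2N true)).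
Proof.
move=> Gaa.
have [suppN _] := GaN; have [s [sK Hs]] := suppN a Gaa.
have [s' Hs'] := preimage_list (emb_inj E) s.
have s'K u : List.In u s' -> Kp u by move=> /Hs' /sK /(emb_K E).
have [_ [buildM _]] := GaM; have [a' [Gaa' Ha']] := buildM s' s'K.
exists a'; split => // w Kw.
by rewrite -{1}(emb_c2 E) -(emb_pi E) Ha' // Hs' Hs //; apply/(emb_K E).
Qed.

Lemma Hb_embedding_onto u y : Kp u -> Hb (e u) y -> exists y', Hb u y' /\ e y' = y.
Proof.
move=> Ku Hy.
have [[x Hx] torsM] := T14M.1 u Ku.
have [_ torsN] := T14N.1 _ ((emb_K E u).1 Ku).
have [_ [h_fun [_ h_onto]]] := torsN _ ((emb_Hb E _ _).1 Hx).
have [b [Hab hb]] := h_onto y Hy.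
have [b' [Hab' eb']] := Ha_embedding_onto Hab.
have [y' hy'] := (torsM x Hx).1 b' Hab'.
exists y'; split; first by case: (T9M hy') => _ [_ [_ ?]].
by apply: (h_fun b) hb; rewrite -eb'; apply/(emb_hh E).
Qed.

Lemma Gb_embedding_approx l u y : Kp u -> Gb (cwN l) (e u) y ->
  exists y', Gb (cwM l) u y' /\ exists c, gg (cwN l) (e u) c y (e y') /\
    forall w, Kp w -> Defs.pi (e w) c (c2N false).
Proof.
move=> Ku Gy.
have [[x Gx] torsM] := T13M.1 _ _ (T3M l) Ku.
have GNx : Gb (cwN l) (e u) (e x) by rewrite -(emb_cw E); apply/(emb_Gb E).
have [_ [_ [_ g_onto]]] := (T13N.1 _ _ (T3N l) ((emb_K E u).1 Ku)).2 _ GNx.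
have [a [Gaa ga]] := g_onto y Gy.
have [a' [Gaa' same]] := Ga_embedding_approx Gaa.
have [y' ga'] := (torsM x Gx).1 a' Gaa'.
exists y'; split; first by case: (T8M ga') => _ [_ [_ [_ ?]]].
have Gea' : Ga (e a') := (emb_Ga E a').1 Gaa'.
have [_ [_ [sum_ex _]]] := T11N; have [c [_ acc]] := sum_ex _ _ Gaa Gea'.
exists c; split.
  by apply: gg_transport T13N ga _ acc; rewrite -(emb_cw E); apply/(emb_gg E).
move=> w Kw; apply: subgroup_prod_sum_proj0 T11N Gaa Gea' acc _ _.
  exact/(emb_K E).
exact: iff_sym (same w Kw).
Qed.

End Embedding.

(* [hk] is unused: the argument works for every k > 0. *)
Theorem mainTheorem9 (k : nat) (hk : 1 < k) (M N : Lstr k) :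
  phi M -> phi N -> substructure M N -> hasSolution N -> hasSolution M.
Proof.
move=> phiM phiN /substructure_embedding [e E] [fN1 [fN2 [fN1G [fN2H fNQ]]]].
have [[T1M [_ [T3M [_ [_ [_ [_ [T8M [T9M [_ [_ [_ [T13M [T14M _]]]]]]]]]]]]]]
  [_ [GaM HaM]]] := phiM.
have [[T1N [_ [T3N [_ [_ [_ [_ [T8N [_ [_ [T11N [T12N [T13N [T14N [T15N [T16N _]]]]]]]]]]]]]]]]
  [_ [GaN HaN]]] := phiN.
have KN u : Kp u -> Kp (e u) := (emb_K E u).1.
have [f2 f2P] := partial_choice (c2 M false) (fun u Ku =>
  Hb_embedding_onto E T3N T9M T12N T14M T14N HaM HaN Ku (fN2H _ (KN u Ku))).
have [f1 f1P] := partial_choice (P := fun lu => Kp lu.2) (c2 M false) (fun lu Ku =>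
  Gb_embedding_approx E T3M T3N T8M T11N T13M T13N GaM GaN Ku (fN1G lu.1 _ (KN _ Ku))).
exists (fun l u => f1 (l, u)), f2; split; first by move=> l u /(f1P (l, u)) [].
split; first by move=> u /f2P [].
move=> l us w fc; have [Kw Kus] := faces_K fc; have [Hw ew] := f2P w Kw.
have := fNQ l _ _ (faces_embedding E T1M T1N fc); rewrite -ew => Q0.
apply/(emb_Q E); apply: (Q_upd_all T8N T15N T16N Q0 ((emb_Hb E _ _).1 Hw)) => i.
have [_ [c [gc pc]]] := f1P (l, us i) (Kus i).
by exists (e (us i)), c; split => //; apply: pc.
Qed.
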